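(* Let $\Gamma$, $g$, $\chi$, $r$ and $A$ be as follows: $V=kv$ with $v\in V^\chi_g$, $\chi(g)$ a primitive $r$-th root of unity, $\chi^r=\epsilon$, $g^r\ne1$, and $A$ the Hopf algebra generated by $\Gamma$ and $x$ with $\Delta x=x\otimes 1+g\otimes x$, $hx=\chi(h)xh$, $x^r=g^r-1$. Let $s$ be the order of $g^r$ in $\Gamma$. Then the Jacobson radical of $A$ is the two-sided ideal generated by $(1+g^r+g^{2r}+\cdots+g^{(s-1)r})x$.
   Context: $k$ algebraically closed of characteristic $0$, $\Gamma$ a finite abelian group, $\hat\Gamma$ its character group with trivial character $\epsilon$; $V^\chi_g$ denotes elements of degree $g$ on which $h\in\Gamma$ acts by $\chi(h)$. *)

From HB Require Import structures.
From mathcomp Require Import all_boot all_order all_algebra all_fingroup.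
Set Implicit Arguments. Unset Strict Implicit. Unset Printing Implicit Defensive.
Import GRing.Theory.
Local Open Scope ring_scope.

Definition left_ideal (R : nzRingType) (I : R -> Prop) : Prop :=
  [/\ I 0, (forall a b, I a -> I b -> I (a + b)) & (forall a b, I b -> I (a * b))].

Definition maximal_left_ideal (R : nzRingType) (I : R -> Prop) : Prop :=
  [/\ left_ideal I, ~ I 1 &
      forall J : R -> Prop, left_ideal J -> ~ J 1 ->
        (forall a, I a -> J a) -> forall a, J a -> I a].

Definition jacobson_radical (R : nzRingType) (a : R) : Prop :=
  forall I : R -> Prop, maximal_left_ideal I -> I a.

Definition ideal_gen (R : nzRingType) (e : R) (a : R) : Prop :=
  exists n (u v : 'I_n -> R), a = \sum_(i < n) u i * e * v i.

Definition is_alg_hom (k : fieldType) (A B : algType k) (f : A -> B) : Prop :=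
  [/\ forall a b, f (a + b) = f a + f b,
      forall (c : k) a, f (c *: a) = c *: f a,
      forall a b, f (a * b) = f a * f b & f 1 = 1].

Definition A_rels (k : fieldType) (Gam : finGroupType) (chi : Gam -> k)
    (g : Gam) (r : nat) (B : algType k) (gam : Gam -> B) (x : B) : Prop :=
  [/\ gam 1%g = 1,
      forall h1 h2, gam (h1 * h2)%g = gam h1 * gam h2,
      forall h, gam h * x = chi h *: (x * gam h) &
      x ^+ r = gam (g ^+ r)%g - 1].

(* (A, gam, x) is the k-algebra presented by generators Gamma, x and the relations:
   universal property. *)
Definition is_presented_A (k : fieldType) (Gam : finGroupType) (chi : Gam -> k)
    (g : Gam) (r : nat) (A : algType k) (gam : Gam -> A) (x : A) : Prop :=
  A_rels chi g r gam x /\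
  forall (B : algType k) (gamB : Gam -> B) (xB : B), A_rels chi g r gamB xB ->
    (exists f : A -> B, [/\ is_alg_hom f, forall h, f (gam h) = gamB h & f x = xB]) /\
    (forall f1 f2 : A -> B,
        is_alg_hom f1 -> (forall h, f1 (gam h) = gamB h) -> f1 x = xB ->
        is_alg_hom f2 -> (forall h, f2 (gam h) = gamB h) -> f2 x = xB ->
        forall a, f1 a = f2 a).

(* The element [e] (the sum of the powers of [g ^+ r]) is central, since [chi (g ^+ r) = 1],
   and [e * x ^+ r = e * (g ^+ r - 1) = 0].  As [x] moves past any element at the cost of a
   scalar, [(b * (e * x)) ^+ r = 0] for every [b], so [e * x] lies in the radical.
   Conversely, write a radical element as [\sum_(j < r) x ^+ j * p_j] with [p_j] in the span
   of [Gamma].  A character-weighted average of its conjugates by the powers of [g] isolates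
   each [x ^+ j * p_j], which therefore stays in the radical.  The span of [Gamma] meets the
   radical trivially: [Gamma] is simultaneously diagonalizable, and a nonzero idempotent never
   lies in the radical.  Hence [p_0 = 0], and for [j > 0] the element
   [(g ^+ r - 1) * p_j = x ^+ (r - j) * x ^+ j * p_j] vanishes, so that [e * p_j = #[g ^+ r] p_j]
   and [x ^+ j * p_j] is a multiple of [x ^+ j.-1 * (e * x) * p_j]. *)

From HB Require Import structures.
From mathcomp Require Import all_boot all_order all_algebra all_fingroup.
From mathcomp Require Import cyclic separable.
From mathcomp Require Import boolp classical_sets.
Import GRing.Theory.
Set Implicit Arguments. Unset Strict Implicit. Unset Printing Implicit Defensive.
Local Open Scope ring_scope.

Section JacobsonRadical.
Variable R : nzRingType.
Implicit Types (a b y : R) (L M : R -> Prop).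

Lemma left_ideal_sub_maximal L : left_ideal L -> ~ L 1 ->
  exists M, maximal_left_ideal M /\ forall a, L a -> M a.
Proof.
case=> L0 LD LM L1.
(* [set0] is admitted so that the union of the empty chain stays in [P]. *)
pose P : set (set R) := fun I =>
  [/\ I = set0 \/ (forall a, L a -> I a), (forall a b, I a -> I b -> I (a + b)),
      (forall a b, I b -> I (a * b)) & ~ I 1].
have [M [[M0 MD MM M1] Mmax]] : exists M, P M /\ forall N, (M `<` N)%classic -> ~ P N.
  apply: Zorn_bigcup => F FP Ftot; split.
  - have [[X [FX Xn]]|F0] := pselect (exists X, F X /\ X <> set0).
      right => a La; exists X => //.
      by case: (FP X FX) => -[/Xn //|XL] *; exact: XL.
    left; apply/seteqP; split => a //= [X FX Xa].
    by apply: F0; exists X; split => // X0; rewrite X0 in Xa.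
  - move=> a b [X FX Xa] [Y FY Yb].
    have [XY|YX] := Ftot X Y FX FY.
    + by exists Y => //; case: (FP Y FY) => _ YD _ _; apply: YD => //; exact: XY.
    + by exists X => //; case: (FP X FX) => _ XD _ _; apply: XD => //; exact: YX.
  - by move=> a b [X FX Xb]; exists X => //; case: (FP X FX) => _ _ XM _; exact: XM.
  - by move=> [X FX X1]; case: (FP X FX) => _ _ _; apply.
have ML : forall a, L a -> M a.
  case: M0 => [M0|//]; exfalso; apply: (Mmax L); last by split => //; right.
  by rewrite M0; split => // /(_ 0); apply.
exists M; split => //; split => //; first by split => //; exact: ML.
move=> J [J0 JD JM] J1 MJ a Ja; have [//|Ma] := pselect (M a); exfalso.
have MJp : (M `<` J)%classic by split => // JM'; apply: Ma; exact: JM'.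
apply: (Mmax J MJp); split => //; right => b Lb; apply: MJ; exact: ML.
Qed.

Lemma jacobson_radicalP y :
  jacobson_radical y <-> forall b, exists c, c * (1 - b * y) = 1.
Proof.
split=> [Jy b | yP M [[M0 MD MM] M1 Mmax]].
  pose L a := exists c, a = c * (1 - b * y).
  have hL : left_ideal L.
    split; first by exists 0; rewrite mul0r.
    - by move=> _ _ [c1 ->] [c2 ->]; exists (c1 + c2); rewrite mulrDl.
    - by move=> a _ [c ->]; exists (a * c); rewrite mulrA.
  have [[c c1]|L1] := pselect (L 1); first by exists c.
  have [M [Mmax LM]] := left_ideal_sub_maximal hL L1.
  have [[_ MD MM] M1 _] := Mmax.
  exfalso; apply: M1; rewrite -(subrK (b * y) 1); apply: MD.
    by apply: LM; exists 1; rewrite mul1r.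
  by apply: MM; exact: Jy.
pose J a := exists m c, M m /\ a = m + c * y.
have hJ : left_ideal J.
  split; first by exists 0, 0; rewrite mul0r addr0.
  - move=> _ _ [m1 [c1 [Mm1 ->]]] [m2 [c2 [Mm2 ->]]].
    by exists (m1 + m2), (c1 + c2); rewrite mulrDl addrACA; split => //; exact: MD.
  - move=> a _ [m [c [Mm ->]]]; exists (a * m), (a * c).
    by rewrite mulrDr mulrA; split => //; exact: MM.
have MJ a : M a -> J a by move=> Ma; exists a, 0; rewrite mul0r addr0.
have [[m [b [Mm /esym Eb]]]|J1] := pselect (J 1); last first.
  by apply: (Mmax J hJ J1 MJ); exists 0, 1; rewrite mul1r add0r.
have [c cm] := yP b; exfalso; apply: M1.
by rewrite -cm -Eb addrK; exact: MM.
Qed.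

Lemma jacobson_radical0 : jacobson_radical (0 : R).
Proof. by move=> M [[]]. Qed.

Lemma jacobson_radicalD a b :
  jacobson_radical a -> jacobson_radical b -> jacobson_radical (a + b).
Proof.
by move=> Ja Jb M Mmax; have [[_ MD _] _ _] := Mmax; apply: MD; [exact: Ja | exact: Jb].
Qed.

Lemma jacobson_radical_sum (I : Type) (s : seq I) (F : I -> R) :
  (forall i, jacobson_radical (F i)) -> jacobson_radical (\sum_(i <- s) F i).
Proof.
move=> JF; elim: s => [|i s IHs]; first by rewrite big_nil; exact: jacobson_radical0.
by rewrite big_cons; exact: jacobson_radicalD.
Qed.

Lemma jacobson_radicalMl a y : jacobson_radical y -> jacobson_radical (a * y).
Proof. by move=> Jy M Mmax; have [[_ _ MM] _ _] := Mmax; apply: MM; exact: Jy. Qed.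

(* If [c] is a left inverse of [1 - a * b * y],
   then [1 + b * y * c * a] is one of [1 - b * (y * a)]. *)
Lemma jacobson_radicalMr y a : jacobson_radical y -> jacobson_radical (y * a).
Proof.
move/jacobson_radicalP=> yP; apply/jacobson_radicalP => b.
have [c cE] := yP (a * b); exists (1 + b * y * c * a); rewrite mulrDl mul1r.
have -> : b * y * c * a * (1 - b * (y * a)) = b * y * (c * (1 - a * b * y)) * a.
  by rewrite !mulrBr !mulrBl !mulr1 !mulrA.
by rewrite cE mulr1 mulrA subrK.
Qed.

Lemma jacobson_radical_nilpotent y :
  (forall b, exists n, (b * y) ^+ n = 0) -> jacobson_radical y.
Proof.
move=> ynil; apply/jacobson_radicalP => b; have [n byn] := ynil b.
exists (\sum_(i < n) (b * y) ^+ i).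
have byC : GRing.comm (\sum_(i < n) (b * y) ^+ i) (b * y - 1).
  apply: commr_sym; apply: commr_sum => i _; apply: commrX.
  by apply: commr_sym; apply: commrB; [exact: commr_refl | exact: commr1].
by rewrite -opprB mulrN byC -subrX1 byn sub0r opprK.
Qed.

Lemma jacobson_radical_idem (f : R) : f * f = f -> jacobson_radical f -> f = 0.
Proof.
move=> ff /jacobson_radicalP/(_ 1)[c]; rewrite mul1r => cf.
by rewrite -[f]mul1r -cf -mulrA mulrBl ff mul1r subrr mulr0.
Qed.

Lemma jacobson_radical_ideal_gen (e : R) a :
  jacobson_radical e -> ideal_gen e a -> jacobson_radical a.
Proof.
move=> Je [n [u [v ->]]]; apply: jacobson_radical_sum => i.
by apply: jacobson_radicalMr; apply: jacobson_radicalMl.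
Qed.

End JacobsonRadical.

Lemma jacobson_radicalZ (R : nzRingType) (A : lalgType R) (c : R) (y : A) :
  jacobson_radical y -> jacobson_radical (c *: y).
Proof. by move=> Jy; rewrite -[y in c *: y]mul1r scalerAl; exact: jacobson_radicalMl. Qed.

Section IdealGen.
Variables (R : nzRingType) (e : R).

Lemma ideal_gen0 : ideal_gen e 0.
Proof. by exists 0%N, (fun _ => 0), (fun _ => 0); rewrite big_ord0. Qed.

Lemma ideal_genM u v : ideal_gen e (u * e * v).
Proof. by exists 1%N, (fun _ => u), (fun _ => v); rewrite big_ord1. Qed.

Lemma ideal_genD a b : ideal_gen e a -> ideal_gen e b -> ideal_gen e (a + b).
Proof.
case=> n1 [u1 [v1 ->]] [n2 [u2 [v2 ->]]].
pose join (f1 : 'I_n1 -> R) (f2 : 'I_n2 -> R) i :=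
  match split i with inl i1 => f1 i1 | inr i2 => f2 i2 end.
exists (n1 + n2)%N, (join u1 u2), (join v1 v2).
by rewrite big_split_ord /join; congr (_ + _); apply: eq_bigr => i _;
  rewrite (unsplitK (inl _)) || rewrite (unsplitK (inr _)).
Qed.

Lemma ideal_gen_sum (I : Type) (s : seq I) (F : I -> R) :
  (forall i, ideal_gen e (F i)) -> ideal_gen e (\sum_(i <- s) F i).
Proof.
move=> eF; elim: s => [|i s IHs]; first by rewrite big_nil; exact: ideal_gen0.
by rewrite big_cons; exact: ideal_genD.
Qed.

End IdealGen.

Lemma closed_field_prim_root (k : closedFieldType) n :
  (n%:R : k) != 0 -> exists z : k, n.-primitive_root z.
Proof.
move=> n0; have n_gt0 : (0 < n)%N by rewrite lt0n; apply: contraNneq n0 => ->.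
pose P : {poly k} := 'X^n - 1.
have P_monic : P \is monic by rewrite /P -[1]/(1%:P) monicXnsubC.
have [rs] := closed_field_poly_normal P; rewrite (monicP P_monic) scale1r => Prs.
have size_rs : size rs = n.
  have : size P = n.+1 by rewrite /P -[1]/(1%:P) size_XnsubC.
  by rewrite Prs size_prod_XsubC => -[].
have P_sep : separable_poly P.
  rewrite unlock; apply/Bezout_coprimepP; exists (-1, n%:R^-1 *: 'X) => /=.
  rewrite /P derivB derivXn derivC subr0 -scaler_nat -scalerAl -scalerAr scalerA.
  by rewrite mulVf // scale1r -exprS prednK // mulN1r opprB subrK eqpxx.
have : has n.-primitive_root rs.
  apply: has_prim_root => //; last by rewrite size_rs.
    apply/allP => w w_rs; rewrite unity_rootE.
    have : root P w by rewrite Prs root_prod_XsubC.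
    by rewrite /root /P !hornerE subr_eq0.
  by rewrite -separable_prod_XsubC -Prs.
by case/hasP => z _; exists z.
Qed.

Lemma sum_expr_prim_root (R : idomainType) n (z : R) N : n.-primitive_root z ->
  \sum_(m < n) (z ^+ N) ^+ m = if (n %| N)%N then n%:R else 0.
Proof.
move=> z_prim; rewrite (prim_order_dvd z_prim).
have [zN1|zN1] := eqVneq (z ^+ N) 1.
  by rewrite zN1; under eq_bigr do rewrite expr1n; rewrite sumr_const card_ord.
have /eqP := subrX1 (z ^+ N) n.
rewrite -exprM mulnC exprM (prim_expr_order z_prim) expr1n subrr eq_sym mulf_eq0.
by rewrite subr_eq0 (negbTE zN1) => /eqP ->.
Qed.

Section SpectralIdempotents.
Variables (k : fieldType) (A : algType k) (n : nat) (z : k).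
Hypothesis z_prim : n.-primitive_root z.

Lemma mulr_sum_expr_unity (w : A) : w ^+ n = 1 ->
  w * \sum_(t < n) w ^+ t = \sum_(t < n) w ^+ t.
Proof.
move=> wn; have /eqP := subrX1 w n.
by rewrite wn subrr eq_sym mulrBl mul1r subr_eq0 => /eqP.
Qed.

Definition spectral_idem (u : A) j := n%:R^-1 *: \sum_(t < n) (z ^+ j *: u) ^+ t.

Variable u : A.
Hypothesis un : u ^+ n = 1.

Lemma spectral_idem_fixed j m : (z ^+ j *: u) ^+ m * spectral_idem u j = spectral_idem u j.
Proof.
have wn : (z ^+ j *: u) ^+ n = 1.
  by rewrite exprZn un -exprM mulnC exprM (prim_expr_order z_prim) expr1n scale1r.
elim: m => [|m IHm]; first by rewrite mul1r.
by rewrite exprSr -mulrA -scalerAr mulr_sum_expr_unity // scalerAr.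
Qed.

Lemma spectral_idem_eigen j : u * spectral_idem u j = (z ^+ j)^-1 *: spectral_idem u j.
Proof.
have zj_neq0 : z ^+ j != 0.
  by rewrite expf_neq0 // (prim_root_eq0 z_prim) -lt0n (prim_order_gt0 z_prim).
by rewrite -{2}(spectral_idem_fixed j 1) expr1 -scalerAl scalerA mulVf ?scale1r.
Qed.

Lemma spectral_idem_idem j : spectral_idem u j * spectral_idem u j = spectral_idem u j.
Proof.
rewrite {1}/spectral_idem -scalerAl big_distrl /=.
under eq_bigr do rewrite spectral_idem_fixed.
by rewrite sumr_const card_ord -scaler_nat scalerA mulVf ?scale1r // (prim_root_natf_neq0 z_prim).
Qed.

Lemma sum_spectral_idem : \sum_(j < n) spectral_idem u j = 1.
Proof.
rewrite -scaler_sumr exchange_big /=.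
under eq_bigr do under eq_bigr do rewrite exprZn -exprM mulnC exprM.
under eq_bigr do rewrite -scaler_suml sum_expr_prim_root //.
case: n z_prim => [|n'] z_prim'; first by have := prim_order_gt0 z_prim'.
rewrite big_ord_recl dvdn0 big1 => [|t _]; last first.
  by rewrite lift0 gtnNdvd ?ltnS // scale0r.
by rewrite expr0 addr0 scalerA mulVf ?scale1r ?(prim_root_natf_neq0 z_prim').
Qed.

Lemma spectral_idem_comm v j : GRing.comm v u -> GRing.comm v (spectral_idem u j).
Proof.
move=> vu; rewrite /GRing.comm -scalerAl -scalerAr; congr (_ *: _).
apply: commr_sum => t _; apply: commrX.
by rewrite /GRing.comm -scalerAl -scalerAr vu.
Qed.

End SpectralIdempotents.

Section CommutingRootsOfUnity.
Variables (k : fieldType) (A : algType k) (n : nat) (z : k).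
Hypothesis z_prim : n.-primitive_root z.
Variable P : A -> Prop.
Hypothesis P_unity : forall u, P u -> u ^+ n = 1.
Hypothesis P_comm : forall u v, P u -> P v -> GRing.comm u v.

Lemma common_eigen_idem (L : seq A) y : (forall u, u \in L -> P u) -> y != 0 ->
  exists F, [/\ F * F = F, y * F != 0, forall v, P v -> GRing.comm v F &
                forall u, u \in L -> exists c, u * F = c *: F].
Proof.
elim: L => [|u L IHL] PL y_neq0.
  by exists 1; split=> //; [rewrite mulr1 | rewrite mulr1 | move=> v _; exact: commr1].
have [|F [FF yF PF FL]] := IHL _ y_neq0; first by move=> v vL; apply: PL; rewrite inE vL orbT.
have Pu : P u by apply: PL; rewrite mem_head.
pose E := spectral_idem n z u.
have [j yFE] : exists j : 'I_n, y * F * E j != 0.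
  have [//|yFE0] := pselect (exists j : 'I_n, y * F * E j != 0); move/eqP: yF; case.
  rewrite -[y * F]mulr1 -(sum_spectral_idem z_prim u) big_distrr big1 //= => j _.
  by have [//|yFEj] := eqVneq (y * F * E j) 0; case: yFE0; exists j.
have PE v : P v -> GRing.comm v (E j).
  by move=> Pv; exact: (spectral_idem_comm n z j (P_comm Pv Pu)).
have FE : GRing.comm F (E j) by exact: (spectral_idem_comm n z j (commr_sym (PF u Pu))).
exists (F * E j); split.
- by rewrite mulrA -(mulrA F) -FE mulrA FF -mulrA spectral_idem_idem // P_unity.
- by rewrite mulrA.
- by move=> v Pv; apply: commrM; [exact: PF | exact: PE].
- move=> w; rewrite inE => /predU1P[->|wL].
    exists (z ^+ j)^-1; rewrite mulrA (PF u Pu) -mulrA.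
    by rewrite spectral_idem_eigen // ?P_unity // scalerAr.
  by have [c Fc] := FL w wL; exists c; rewrite mulrA Fc scalerAl.
Qed.

(* A nonzero [p] acts by a nonzero scalar [b] on a common eigen-idempotent [F] of the [u i],
   so [F = b^-1 *: (p * F)] would be a nonzero idempotent in the radical. *)
Lemma span_jacobson_radical_eq0 (I : Type) (s : seq I) (c : I -> k) (u : I -> A) :
  (forall i, P (u i)) -> jacobson_radical (\sum_(i <- s) c i *: u i) ->
  \sum_(i <- s) c i *: u i = 0.
Proof.
move=> Pu Jp; apply/eqP; apply: contraT => p_neq0.
have [|F [FF pF _ FL]] := common_eigen_idem (L := map u s) _ p_neq0.
  by elim: s {Jp p_neq0} => [|i s IHs] v //; rewrite inE => /predU1P[->|/IHs].
have [b pFb] : exists b, (\sum_(i <- s) c i *: u i) * F = b *: F.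
  elim: s {Jp p_neq0 pF} FL => [|i s IHs] FL.
    by exists 0; rewrite big_nil mul0r scale0r.
  have [|b Fb] := IHs; first by move=> v vs; apply: FL; rewrite inE vs orbT.
  have [w Fw] := FL (u i) (mem_head _ _).
  by exists (c i * w + b); rewrite big_cons mulrDl Fb -scalerAl Fw scalerA scalerDl.
have b_neq0 : b != 0 by apply: contraNneq pF => b0; rewrite pFb b0 scale0r.
have JF : jacobson_radical F.
  rewrite -[F]scale1r -(mulVf b_neq0) -scalerA -pFb.
  by apply: jacobson_radicalZ; exact: jacobson_radicalMr.
by move: pF; rewrite (jacobson_radical_idem FF JF) mulr0 eqxx.
Qed.

End CommutingRootsOfUnity.

Section SubalgebraType.
Variables (k : fieldType) (A : algType k) (S : {pred A}).

(* [S] keyed by a proof of closure, so that it carries a canonical subalgebra structure. *)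
Definition subalg_pred (hS : subalg_closed S) : {pred A} := S.

Variable hS : subalg_closed S.
HB.instance Definition _ :=
  GRing.isSubalgClosed.Build k A (subalg_pred hS) (GRing.subalg_closed_semi hS).

Inductive subalg_type := SubalgElem a of a \in subalg_pred hS.
Definition subalg_val u := let: SubalgElem a _ := u in a.
HB.instance Definition _ := [isSub for subalg_val].
HB.instance Definition _ := [Choice of subalg_type by <:].
HB.instance Definition _ := [SubChoice_isSubAlgebra of subalg_type by <:].

End SubalgebraType.

Lemma presented_subalg_full (k : fieldType) (Gam : finGroupType) (chi : Gam -> k)
    (g : Gam) (r : nat) (A : algType k) (gam : Gam -> A) (x : A) (S : {pred A}) :
  is_presented_A chi g r gam x -> subalg_closed S ->
  (forall h, gam h \in S) -> x \in S -> forall a, a \in S.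
Proof.
move=> [relA univ] hS Sgam Sx a; have [gam1 gamM gam_x xr] := relA.
pose gamS h := SubalgElem (Sgam h : gam h \in subalg_pred hS).
pose xS := SubalgElem (Sx : x \in subalg_pred hS).
have relS : A_rels chi g r gamS xS.
  split=> [|h1 h2|h|]; apply: val_inj.
  - by rewrite rmorph1 /= gam1.
  - by rewrite rmorphM /= gamM.
  - by rewrite linearZ /= gam_x.
  - by rewrite rmorphXn rmorphB rmorph1 /= xr.
have [[f [[fD fZ fM f1] f_gam f_x] _]] := univ _ _ _ relS.
have val_f_hom : is_alg_hom (fun b => val (f b)).
  split=> [b1 b2|c b|b1 b2|].
  - by rewrite fD rmorphD.
  - by rewrite fZ linearZ.
  - by rewrite fM rmorphM.
  - by rewrite f1 rmorph1.
have [_ uniqA] := univ _ _ _ relA.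
have id_hom : is_alg_hom (fun b : A => b) by [].
have f_gam' h : val (f (gam h)) = gam h by rewrite f_gam.
have f_x' : val (f x) = x by rewrite f_x.
by rewrite -(uniqA _ _ val_f_hom f_gam' f_x' id_hom (fun _ => erefl) erefl a); exact: valP.
Qed.

Section PresentedAlgebra.
Variables (k : fieldType) (Gam : finGroupType).
Hypothesis Gab : abelian [set: Gam].
Variable chi : Gam -> k.
Hypotheses (chi1 : chi 1%g = 1) (chiM : forall h1 h2, chi (h1 * h2)%g = chi h1 * chi h2).
Variables (g : Gam) (r : nat).
Hypothesis prim : r.-primitive_root (chi g).
Variables (A : algType k) (gam : Gam -> A) (x : A).
Hypothesis presA : is_presented_A chi g r gam x.

Local Notation gr := (g ^+ r)%g.

Lemma gam1 : gam 1%g = 1. Proof. by case: presA => -[]. Qed.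
Lemma gamM h1 h2 : gam (h1 * h2)%g = gam h1 * gam h2. Proof. by case: presA => -[]. Qed.
Lemma gam_x h : gam h * x = chi h *: (x * gam h). Proof. by case: presA => -[]. Qed.
Lemma x_r : x ^+ r = gam gr - 1. Proof. by case: presA => -[]. Qed.

Lemma r_gt0 : (0 < r)%N. Proof. exact: prim_order_gt0 prim. Qed.

Lemma gamX h m : gam (h ^+ m)%g = gam h ^+ m.
Proof. by elim: m => [|m IHm]; rewrite ?expg0 ?gam1 // expgS gamM IHm exprS. Qed.

Lemma chiX h m : chi (h ^+ m)%g = chi h ^+ m.
Proof. by elim: m => [|m IHm]; rewrite ?expg0 ?chi1 // expgS chiM IHm exprS. Qed.

Lemma gamV h : gam h * gam h^-1 = 1. Proof. by rewrite -gamM mulgV gam1. Qed.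

Lemma gam_comm h1 h2 : GRing.comm (gam h1) (gam h2).
Proof. by rewrite /GRing.comm -!gamM (centsP Gab) ?inE. Qed.

Lemma chi_neq0 h : chi h != 0.
Proof.
apply/eqP => chi0; move: chi1.
by rewrite -(mulgV h) chiM chi0 mul0r => /esym/eqP; rewrite oner_eq0.
Qed.

Lemma gam_xn h m : gam h * x ^+ m = chi h ^+ m *: (x ^+ m * gam h).
Proof.
elim: m => [|m IHm]; first by rewrite !expr0 mul1r mulr1 scale1r.
rewrite exprSr mulrA IHm -scalerAl -(mulrA (x ^+ m) (gam h) x) gam_x -scalerAr scalerA.
by rewrite mulrA -!exprSr.
Qed.

Lemma chi_gr : chi gr = 1. Proof. by rewrite chiX (prim_expr_order prim). Qed.

Definition monomial (t : k * nat * Gam) : A := t.1.1 *: (x ^+ t.1.2 * gam t.2).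

Lemma monomialM t u : monomial t * monomial u =
  monomial (t.1.1 * u.1.1 * chi t.2 ^+ u.1.2, (t.1.2 + u.1.2)%N, (t.2 * u.2)%g).
Proof.
have xgam_mul m n h h' : x ^+ m * gam h * (x ^+ n * gam h') =
    chi h ^+ n *: (x ^+ (m + n) * gam (h * h')%g).
  rewrite mulrA -(mulrA (x ^+ m)) gam_xn -scalerAr -scalerAl.
  by rewrite mulrA -exprD -mulrA -gamM.
by rewrite /monomial -scalerAl -scalerAr xgam_mul !scalerA.
Qed.

Definition monomial_span : {pred A} :=
  fun a => `[< exists s, a = \sum_(t <- s) monomial t >].

Lemma monomial_span_closed : subalg_closed monomial_span.
Proof.
split.
- apply/asboolP; exists [:: (1, 0%N, 1%g)].
  by rewrite big_seq1 /monomial scale1r expr0 mul1r gam1.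
- move=> c _ _ /asboolP[s1 ->] /asboolP[s2 ->]; apply/asboolP.
  exists ([seq (c * t.1.1, t.1.2, t.2) | t <- s1] ++ s2).
  rewrite big_cat big_map scaler_sumr; congr (_ + _); apply: eq_bigr => t _.
  by rewrite /monomial scalerA.
- move=> _ _ /asboolP[s1 ->] /asboolP[s2 ->]; apply/asboolP.
  exists [seq (t.1.1 * u.1.1 * chi t.2 ^+ u.1.2, (t.1.2 + u.1.2)%N, (t.2 * u.2)%g)
           | t <- s1, u <- s2].
  rewrite big_allpairs_dep big_distrl; apply: eq_bigr => t _.
  by rewrite big_distrr; apply: eq_bigr => u _; exact: monomialM.
Qed.

Lemma monomial_expansion a : exists s, a = \sum_(t <- s) monomial t.
Proof.
apply/asboolP; apply: (presented_subalg_full presA monomial_span_closed) => [h|].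
  by apply/asboolP; exists [:: (1, 0%N, h)]; rewrite big_seq1 /monomial scale1r mul1r.
by apply/asboolP; exists [:: (1, 1%N, 1%g)]; rewrite big_seq1 /monomial scale1r gam1 mulr1.
Qed.

(* Moving [x ^+ n] past a monomial only rescales it by a power of [chi]. *)
Lemma xn_mulr_swap n a : exists a', x ^+ n * a = a' * x ^+ n.
Proof.
have [s ->] := monomial_expansion a.
exists (\sum_(t <- s) monomial (t.1.1 / chi t.2 ^+ n, t.1.2, t.2)).
rewrite big_distrr big_distrl; apply: eq_bigr => t _ /=.
rewrite /monomial -scalerAr -scalerAl -(mulrA (x ^+ _) (gam _)) gam_xn -scalerAr scalerA.
by rewrite mulfVK ?expf_neq0 ?chi_neq0 // !mulrA -!exprD addnC.
Qed.

Lemma expr_mulrx b m : exists b', (b * x) ^+ m = b' * x ^+ m.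
Proof.
elim: m => [|m [b' IHm]]; first by exists 1; rewrite !expr0 mulr1.
have [b'' xb] := xn_mulr_swap m b.
by exists (b' * b''); rewrite exprSr IHm mulrA -(mulrA b') xb -!mulrA -exprSr.
Qed.

Lemma gam_gr_central a : GRing.comm (gam gr) a.
Proof.
have [s ->] := monomial_expansion a.
rewrite /GRing.comm big_distrr big_distrl; apply: eq_bigr => t _ /=.
rewrite /monomial -scalerAr -scalerAl; congr (_ *: _).
by rewrite mulrA gam_xn chi_gr expr1n scale1r -mulrA gam_comm mulrA.
Qed.

Definition gr_sum := \sum_(i < #[gr]%g) gam (gr ^+ i)%g.

Lemma gr_sumE : gr_sum = \sum_(i < #[gr]%g) gam gr ^+ i.
Proof. by apply: eq_bigr => i _; rewrite gamX. Qed.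

Lemma gr_sum_central a : GRing.comm gr_sum a.
Proof.
by rewrite gr_sumE; apply/commr_sym/commr_sum => i _; exact/commrX/commr_sym/gam_gr_central.
Qed.

Lemma gr_sum_mul_xr : gr_sum * x ^+ r = 0.
Proof. by rewrite x_r gr_sum_central gr_sumE -subrX1 -gamX expg_order gam1 subrr. Qed.

Lemma jacobson_radical_gr_sum_x : jacobson_radical (gr_sum * x).
Proof.
apply: jacobson_radical_nilpotent => b; exists r.
have [b' bxr] := expr_mulrx b r.
rewrite mulrA -gr_sum_central -mulrA exprMn_comm; last exact: gr_sum_central.
have gr_sum_r : gr_sum ^+ r = gr_sum ^+ r.-1 * gr_sum by rewrite -exprSr prednK // r_gt0.
rewrite bxr gr_sum_r -mulrA (mulrA gr_sum) (gr_sum_central b') -(mulrA b').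
by rewrite gr_sum_mul_xr !mulr0.
Qed.

Definition group_span : {pred A} :=
  fun p => `[< exists s : seq (k * Gam), p = \sum_(t <- s) t.1 *: gam t.2 >].

Lemma group_span_closed : subalg_closed group_span.
Proof.
split.
- by apply/asboolP; exists [:: (1, 1%g)]; rewrite big_seq1 scale1r gam1.
- move=> c _ _ /asboolP[s1 ->] /asboolP[s2 ->]; apply/asboolP.
  exists ([seq (c * t.1, t.2) | t <- s1] ++ s2).
  rewrite big_cat big_map scaler_sumr; congr (_ + _).
  by apply: eq_bigr => t _; rewrite scalerA.
- move=> _ _ /asboolP[s1 ->] /asboolP[s2 ->]; apply/asboolP.
  exists [seq (t.1 * u.1, (t.2 * u.2)%g) | t <- s1, u <- s2].
  rewrite big_allpairs_dep big_distrl; apply: eq_bigr => t _.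
  rewrite big_distrr; apply: eq_bigr => u _ /=.
  by rewrite -scalerAl -scalerAr scalerA gamM.
Qed.

Local Notation K := (subalg_pred group_span_closed).

Lemma group_span_gam h : gam h \in K.
Proof. by apply/asboolP; exists [:: (1, h)]; rewrite big_seq1 scale1r. Qed.

Variable z : k.
Hypothesis z_prim : #|Gam|.-primitive_root z.

Lemma group_span_jacobson_radical_eq0 p : p \in K -> jacobson_radical p -> p = 0.
Proof.
move=> /asboolP[s ->].
apply: (span_jacobson_radical_eq0 z_prim (P := fun u => exists h, u = gam h)).
- by move=> _ [h ->]; rewrite -gamX -cardsT expg_cardG ?inE ?gam1.
- by move=> _ _ [h1 ->] [h2 ->]; exact: gam_comm.
- by move=> t; exists t.2.
Qed.

Definition x_component (s : seq (k * nat * Gam)) j :=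
  \sum_(t <- s | (t.1.2 %% r == j)%N) t.1.1 *: ((gam gr - 1) ^+ (t.1.2 %/ r) * gam t.2).

Lemma x_component_group_span s j : x_component s j \in K.
Proof.
apply: rpred_sum => t _; apply: rpredZ; apply: rpredM; last exact: group_span_gam.
by apply: rpredX; apply: rpredB; [exact: group_span_gam | exact: rpred1].
Qed.

Lemma xn_x_component s j :
  x ^+ j * x_component s j = \sum_(t <- s | (t.1.2 %% r == j)%N) monomial t.
Proof.
rewrite big_distrr; apply: eq_bigr => t /eqP <- /=.
by rewrite /monomial -scalerAr -x_r -exprM mulrA -exprD mulnC addnC -divn_eq.
Qed.

Lemma monomial_sum_x_components s :
  \sum_(t <- s) monomial t = \sum_(j < r) x ^+ j * x_component s j.
Proof.
under [RHS]eq_bigr => j _ do rewrite xn_x_component big_mkcond.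
rewrite exchange_big /=; apply: eq_bigr => t _.
by rewrite -big_mkcond /= (big_pred1 (Ordinal (ltn_pmod t.1.2 r_gt0))).
Qed.

Lemma conj_monomial h t : gam h * monomial t * gam h^-1 = chi h ^+ t.1.2 *: monomial t.
Proof.
rewrite /monomial -scalerAr -scalerAl scalerA mulrC -scalerA; congr (_ *: _).
by rewrite mulrA gam_xn -scalerAl -!mulrA gam_comm -scalerAl -!mulrA gamV mulr1.
Qed.

(* The weight [chi g ^+ (m * (r - j))] is [chi g ^- (m * j)]: averaging keeps exactly the
   monomials whose [x]-degree is [j] modulo [r]. *)
Definition x_degree_proj j a := r%:R^-1 *:
  \sum_(m < r) chi g ^+ (m * (r - j)) *: (gam (g ^+ m)%g * a * gam (g ^+ m)^-1%g).

Lemma x_degree_proj_jacobson j a : jacobson_radical a -> jacobson_radical (x_degree_proj j a).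
Proof.
move=> Ja; apply: jacobson_radicalZ; apply: jacobson_radical_sum => m.
by apply: jacobson_radicalZ; apply: jacobson_radicalMr; exact: jacobson_radicalMl.
Qed.

Lemma x_degree_proj_monomials j s : (j < r)%N ->
  x_degree_proj j (\sum_(t <- s) monomial t) = \sum_(t <- s | (t.1.2 %% r == j)%N) monomial t.
Proof.
move=> jr; rewrite /x_degree_proj [RHS]big_mkcond /=.
under eq_bigr => m _ do rewrite big_distrr big_distrl scaler_sumr.
rewrite exchange_big scaler_sumr; apply: eq_bigr => t _ /=.
under eq_bigr => m _ do rewrite conj_monomial scalerA chiX -!exprM -exprD -mulnDr mulnC exprM.
rewrite -scaler_suml scalerA sum_expr_prim_root //.
have -> : (r %| r - j + t.1.2)%N = (t.1.2 %% r == j)%N.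
  rewrite -[j in RHS](modn_small jr) -(eqn_modDr (r - j)) subnKC ?(ltnW jr) //.
  by rewrite modnn addnC.
by case: eqP => _; rewrite ?mulVf ?scale1r ?mulr0 ?scale0r ?(prim_root_natf_neq0 prim).
Qed.

Lemma x_component_jacobson s j : (j < r)%N ->
  jacobson_radical (\sum_(t <- s) monomial t) -> jacobson_radical (x ^+ j * x_component s j).
Proof.
by move=> jr /(x_degree_proj_jacobson j); rewrite x_degree_proj_monomials // xn_x_component.
Qed.

Lemma ideal_gen_xn_group_span j p : (j < r)%N -> p \in K ->
  jacobson_radical (x ^+ j * p) -> ideal_gen (gr_sum * x) (x ^+ j * p).
Proof.
case: j => [|j] jr Kp Jp.
  rewrite expr0 mul1r in Jp *.
  by rewrite (group_span_jacobson_radical_eq0 Kp Jp); exact: ideal_gen0.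
have Jgrp : jacobson_radical ((gam gr - 1) * p).
  have := jacobson_radicalMl (x ^+ (r - j.+1)) Jp.
  by rewrite mulrA -exprD subnK ?(ltnW jr) // x_r.
have grp : gam gr * p = p.
  apply/eqP; rewrite -subr_eq0 -{2}[p]mul1r -mulrBl.
  by rewrite (group_span_jacobson_radical_eq0 _ Jgrp) // rpredM ?rpredB ?rpred1 ?group_span_gam.
have grXp m : gam gr ^+ m * p = p.
  by elim: m => [|m IHm]; rewrite ?mul1r // exprSr -mulrA grp.
have gr_sum_p : gr_sum * p = #[gr]%g%:R *: p.
  rewrite gr_sumE big_distrl (eq_bigr (fun _ => p)) => [|i _]; last exact: grXp.
  by rewrite sumr_const card_ord scaler_nat.
have ord_gr_neq0 : (#[gr]%g%:R : k) != 0.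
  by apply: (prim_root_dvd_eq0 z_prim); rewrite -cardsT order_dvdG ?inE.
have -> : x ^+ j.+1 * p = (#[gr]%g%:R^-1 *: x ^+ j) * (gr_sum * x) * p.
  rewrite (gr_sum_central x) -scalerAl -scalerAl -!mulrA gr_sum_p -scalerAr -scalerAr.
  by rewrite scalerA mulVf // scale1r mulrA -exprSr.
exact: ideal_genM.
Qed.

Lemma jacobson_radical_in_ideal_gen a :
  jacobson_radical a -> ideal_gen (gr_sum * x) a.
Proof.
move=> Ja; have [s Es] := monomial_expansion a; rewrite Es monomial_sum_x_components.
apply: ideal_gen_sum => j; apply: ideal_gen_xn_group_span => //.
- exact: x_component_group_span.
- by apply: x_component_jacobson; rewrite -?Es.
Qed.

End PresentedAlgebra.

Theorem mainTheorem8
  (k : closedFieldType) (char0 : [pchar k] =i pred0)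
  (Gam : finGroupType) (Gab : abelian [set: Gam])
  (chi : Gam -> k) (chi1 : chi 1%g = 1)
  (chiM : forall h1 h2, chi (h1 * h2)%g = chi h1 * chi h2)
  (g : Gam) (r : nat)
  (prim : r.-primitive_root (chi g))
  (chir : forall h, chi h ^+ r = 1)
  (gr1 : (g ^+ r)%g != 1%g)
  (A : algType k) (gam : Gam -> A) (x : A)
  (presA : is_presented_A chi g r gam x) :
  forall a : A, jacobson_radical a <->
    ideal_gen ((\sum_(i < #[(g ^+ r)%g]%g) gam ((g ^+ r) ^+ i)%g) * x) a.
Proof.
move=> a.
have [z z_prim] : exists z : k, #|Gam|.-primitive_root z.
  apply: closed_field_prim_root; rewrite (pcharf0P _).1 // -lt0n.
  by apply/card_gt0P; exists 1%g.
split; first exact: (jacobson_radical_in_ideal_gen Gab chi1 chiM prim presA z_prim).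
apply: jacobson_radical_ideal_gen; exact: (jacobson_radical_gr_sum_x Gab chi1 chiM prim presA).
Qed.
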